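(* Let $G$ be an abelian group, $H$ a group and $\phi:G\to H$ a nontrivial group homomorphism, and let $F=G\cup\{0\}$ be a Massouros hyperfield with respect to $\phi$ (as defined in the context). Then $F$ has large sums, i.e. there is a nontrivial group homomorphism $f:G\to H'$ (to some group $H'$) such that for all $x,y,z\in G$, if $f(x)=f(y)\ne f(z)$ then $x+y+z=F$.
   Context: A hyperaddition on a nonempty set $H$ is a map $+:H\times H\to\mathcal P^*(H)$ (nonempty subsets of $H$) that is commutative and associative, where for subsets $A,B$ one sets $A+B=\bigcup_{a\in A,b\in B}(a+b)$ and an element $x$ is identified with $\{x\}$; thus $x+y+z=(x+y)+z$. A hypergroup is a set with a hyperaddition having a unique $0$ with $0+h=\{h\}$ for all $h$, such that for each $x$ there is a unique $y=:-x$ with $0\in x+y$, and such that $x\in y+z$ implies $z\in x+(-y)$. A hyperfield is a set $F$ with a hyperaddition and a multiplication such that $(F,+)$ is a hypergroup, $(F,\cdot)$ is a monoid, $a(b+c)=ab+ac$, $r\cdot 0=0$ for all $r$, and $F\setminus\{0\}$ is a multiplicative group. Massouros hyperfield: let $G$ be an abelian group written multiplicatively and $\phi:G\to H$ a group homomorphism with $|\phi(G)|\ge 3$. Let $F=G\cup\{0\}$, with multiplication that of $G$ extended by $0\cdot x=x\cdot 0=0$, and equipped with a hyperaddition making $F$ a hyperfield. $F$ is Massouros (with respect to $\phi$) if: (1) $\phi(-x)=\phi(x)$ for all $x\in G$; (2) for all $x,y\in G$ with $\phi(x)=\phi(y)$, $G\setminus\phi^{-1}(\phi(x))\subseteq x+y$;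 (3) for all $x,y\in G$ with $\phi(x)\ne\phi(y)$, $\phi^{-1}(\{\phi(x),\phi(y)\})\subseteq x+y$. *)

Set Implicit Arguments.

Record is_group (T : Type) (op : T -> T -> T) (e : T) (iv : T -> T) : Prop := {
  grp_assoc : forall a b c, op a (op b c) = op (op a b) c;
  grp_idl : forall a, op e a = a;
  grp_idr : forall a, op a e = a;
  grp_invl : forall a, op (iv a) a = e;
  grp_invr : forall a, op a (iv a) = e }.

Definition is_abelian_group (T : Type) (op : T -> T -> T) (e : T) (iv : T -> T) : Prop :=
  is_group op e iv /\ forall a b, op a b = op b a.

Definition is_group_hom (A B : Type) (opA : A -> A -> A) (opB : B -> B -> B)
  (f : A -> B) : Prop := forall a b, f (opA a b) = opB (f a) (f b).

(* Hyperaddition: hadd x y z means z \in x + y. *)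
Definition single (F : Type) (x : F) : F -> Prop := fun y => y = x.

Definition hsum (F : Type) (hadd : F -> F -> F -> Prop) (A B : F -> Prop) : F -> Prop :=
  fun z => exists a b, A a /\ B b /\ hadd a b z.

Definition hsum3 (F : Type) (hadd : F -> F -> F -> Prop) (x y z : F) : F -> Prop :=
  hsum hadd (hadd x y) (single z).

Record is_hyperfield (F : Type) (hadd : F -> F -> F -> Prop)
    (mul : F -> F -> F) (zero one : F) : Prop := {
  hf_nonempty : forall x y, exists z, hadd x y z;
  hf_comm : forall x y z, hadd x y z <-> hadd y x z;
  hf_assoc : forall x y z w,
      hsum hadd (hadd x y) (single z) w <-> hsum hadd (single x) (hadd y z) w;
  hf_zero : forall h w, hadd zero h w <-> w = h;
  hf_neg : forall x, exists y, hadd x y zero /\ forall y', hadd x y' zero -> y' = y;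
  hf_rev : forall x y z y', hadd y y' zero -> hadd y z x -> hadd x y' z;
  hf_mul_assoc : forall a b c, mul a (mul b c) = mul (mul a b) c;
  hf_mul1l : forall a, mul one a = a;
  hf_mul1r : forall a, mul a one = a;
  hf_distr : forall a b c w,
      hadd (mul a b) (mul a c) w <-> exists u, hadd b c u /\ w = mul a u;
  hf_mul0 : forall r, mul r zero = zero;
  hf_one_neq0 : one <> zero;
  hf_mul_closed : forall a b, a <> zero -> b <> zero -> mul a b <> zero;
  hf_inv : forall a, a <> zero -> exists b, b <> zero /\ mul a b = one /\ mul b a = one }.

(* F = G u {0} modelled as option G, with 0 = None. *)
Definition omul (G : Type) (op : G -> G -> G) (x y : option G) : option G :=
  match x, y with Some a, Some b => Some (op a b) | _, _ => None end.

Definition is_massouros (G H : Type) (phi : G -> H)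
    (hadd : option G -> option G -> option G -> Prop) : Prop :=
  (exists a b c : G, phi a <> phi b /\ phi a <> phi c /\ phi b <> phi c) /\
  (* (1) phi(-x) = phi(x) *)
  (forall x y : G, hadd (Some x) (Some y) None -> phi y = phi x) /\
  (forall x y : G, phi x = phi y ->
     forall z : G, phi z <> phi x -> hadd (Some x) (Some y) (Some z)) /\
  (forall x y : G, phi x <> phi y ->
     forall z : G, (phi z = phi x \/ phi z = phi y) -> hadd (Some x) (Some y) (Some z)).

Definition has_large_sums (G : Type) (op : G -> G -> G)
    (hadd : option G -> option G -> option G -> Prop) : Prop :=
  exists (H' : Type) (opH' : H' -> H' -> H') (eH' : H') (ivH' : H' -> H') (f : G -> H'),
    is_group opH' eH' ivH' /\ is_group_hom op opH' f /\ (exists x, f x <> eH') /\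
    forall x y z : G, f x = f y -> f y <> f z ->
      forall w : option G, hsum3 hadd (Some x) (Some y) (Some z) w.

(* Take [f := phi].  If [phi x = phi y <> phi z], every [w] lies in [x + y + z]:
   [0] lies in [(-z) + z] with [-z] in [x + y], since [phi (-z) = phi z];
   if [phi w <> phi z], then [w] lies in [z + z] with [z] in [x + y];
   if [phi w = phi z], then [w] lies in [u + z] for any [u] in [x + y] whose class
   differs from those of [x] and [z], which exists because [|phi(G)| >= 3]. *)
From Stdlib Require Import Classical.

Lemma image_avoids_two {G H : Type} (phi : G -> H) :
  (exists a b c : G, phi a <> phi b /\ phi a <> phi c /\ phi b <> phi c) ->
  forall p q : H, exists u, phi u <> p /\ phi u <> q.
Proof.
  intros [a [b [c [Hab [Hac Hbc]]]]] p q.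
  destruct (classic (phi a = p \/ phi a = q)) as [Ha | Ha]; [| exists a; tauto].
  destruct (classic (phi b = p \/ phi b = q)) as [Hb | Hb]; [| exists b; tauto].
  exists c; split; intro E; destruct Ha, Hb; congruence.
Qed.

Lemma hsum3_intro {F : Type} {hadd : F -> F -> F -> Prop} {x y z : F} (u : F) {w : F} :
  hadd x y u -> hadd u z w -> hsum3 hadd x y z w.
Proof. intros Hu Hw; exists u, z; repeat split; assumption. Qed.

Lemma hf_opp_neq0 {F : Type} {hadd : F -> F -> F -> Prop} {mul : F -> F -> F}
    {zero one : F} :
  is_hyperfield hadd mul zero one ->
  forall x, x <> zero -> exists y, y <> zero /\ hadd x y zero.
Proof.
  intros HF x Hx.
  destruct (hf_neg HF x) as [y [Hy _]].
  exists y; split; [| exact Hy].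
  intros ->.
  apply (hf_comm HF), (hf_zero HF) in Hy.
  congruence.
Qed.

Section MassourosLargeSums.

Context {G H : Type} {phi : G -> H} {hadd : option G -> option G -> option G -> Prop}.
Hypothesis massouros : is_massouros phi hadd.

Lemma massouros_sum3_Some {x y z : G} :
  phi x = phi y -> phi y <> phi z ->
  forall w : G, hsum3 hadd (Some x) (Some y) (Some z) (Some w).
Proof.
  destruct massouros as [three [_ [same_class diff_class]]].
  intros Hxy Hyz w.
  assert (Hzx : phi z <> phi x) by congruence.
  destruct (classic (phi w = phi z)) as [Hwz | Hwz].
  - destruct (image_avoids_two phi three (phi x) (phi z)) as [u [Hux Huz]].
    apply (hsum3_intro (Some u)); [apply same_class | apply diff_class]; auto.
  - apply (hsum3_intro (Some z)); apply same_class; auto.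
Qed.

Lemma massouros_sum3_None {mul : option G -> option G -> option G} {one : option G}
    {x y z : G} :
  is_hyperfield hadd mul None one ->
  phi x = phi y -> phi y <> phi z ->
  hsum3 hadd (Some x) (Some y) (Some z) None.
Proof.
  destruct massouros as [_ [opp_class [same_class _]]].
  intros HF Hxy Hyz.
  destruct (hf_opp_neq0 HF (Some z) ltac:(discriminate)) as [[n |] [Hn0 Hn]];
    [| now contradiction Hn0].
  apply (hsum3_intro (Some n)).
  - apply same_class; [exact Hxy |].
    rewrite (opp_class z n Hn); congruence.
  - apply (hf_comm HF); exact Hn.
Qed.

End MassourosLargeSums.

Theorem mainTheorem2
  (G : Type) (opG : G -> G -> G) (eG : G) (ivG : G -> G)
  (H : Type) (opH : H -> H -> H) (eH : H) (ivH : H -> H)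
  (phi : G -> H)
  (hadd : option G -> option G -> option G -> Prop) :
  is_abelian_group opG eG ivG ->
  is_group opH eH ivH ->
  is_group_hom opG opH phi ->
  (exists x : G, phi x <> eH) ->
  is_hyperfield hadd (omul opG) None (Some eG) ->
  is_massouros phi hadd ->
  has_large_sums opG hadd.
Proof.
  intros _ HH Hphi Hnontriv HF HM.
  exists H, opH, eH, ivH, phi.
  split; [exact HH |]. split; [exact Hphi |]. split; [exact Hnontriv |].
  intros x y z Hxy Hyz [w |].
  - exact (massouros_sum3_Some HM Hxy Hyz w).
  - exact (massouros_sum3_None HM HF Hxy Hyz).
Qed.
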